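(* Let $G$ be a word-representable graph. Then $l(G \circ K_2) \le 2\,l(G) + \kappa_G$, where $\kappa_G$ is the size of a maximum clique of $G$.
   Context: All graphs are simple and undirected. Letters $x,y$ alternate in a word $w$ if deleting all other letters from $w$ yields $xyxy\ldots$ or $yxyx\ldots$ (of either parity). A word $w$ over $V(G)$ represents $G$ if every vertex occurs in $w$ and for all distinct $x,y$, $xy\in E(G)$ iff $x,y$ alternate in $w$; $G$ is word-representable if such a word exists, and $l(G)$ is the minimum length of a word representing $G$. For a graph $G$ and a rooted graph $H$ (a graph with a distinguished root vertex), the rooted product $G\circ H$ is obtained by taking $|V(G)|$ disjoint copies of $H$, one for each vertex $v$ of $G$, and identifying each vertex $v$ of $G$ with the root of its copy of $H$. Here $K_2$ is rooted at one of its vertices. *)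

From mathcomp Require Import all_boot.
From Stdlib Require Import ClassicalDescription.
Set Implicit Arguments. Unset Strict Implicit. Unset Printing Implicit Defensive.

Definition simple_graph (T : finType) (e : rel T) : Prop :=
  symmetric e /\ irreflexive e.

Definition alternate (T : eqType) (w : seq T) (x y : T) : Prop :=
  let s := [seq z <- w | (z == x) || (z == y)] in
  exists k, s = mkseq (fun i => if odd i then y else x) k \/
            s = mkseq (fun i => if odd i then x else y) k.

Definition represents (T : finType) (e : rel T) (w : seq T) : Prop :=
  (forall v : T, v \in w) /\
  (forall x y : T, x != y -> (e x y <-> alternate w x y)).

Definition word_representable (T : finType) (e : rel T) : Prop :=
  exists w : seq T, represents e w.

Definition rep_length (T : finType) (e : rel T) (n : nat) : Prop :=
  exists w : seq T, represents e w /\ size w = n.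

Definition rep_length_b (T : finType) (e : rel T) : pred nat :=
  fun n => if excluded_middle_informative (rep_length e n) then true else false.

Lemma rep_length_b_ex (T : finType) (e : rel T) :
  word_representable e -> exists n, rep_length_b e n.
Proof.
move=> [w Hw]; exists (size w); rewrite /rep_length_b.
case: excluded_middle_informative => // H; exfalso; apply: H; by exists w.
Qed.

(* l(G): minimum length of a word representing G (0 by convention if G is
   not word-representable; only used for word-representable graphs). *)
Definition l_rep (T : finType) (e : rel T) : nat :=
  match excluded_middle_informative (word_representable e) with
  | left H => ex_minn (rep_length_b_ex H)
  | right _ => 0
  end.

Definition is_clique (T : finType) (e : rel T) (A : {set T}) : bool :=
  [forall x in A, forall y in A, (x != y) ==> e x y].

Definition clique_number (T : finType) (e : rel T) : nat :=
  \max_(A : {set T} | is_clique e A) #|A|.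

(* Rooted product G o K_2 (K_2 rooted at one vertex): vertex set T + T,
   where inl v is the vertex v of G and inr v is the pendant vertex
   attached to v. *)
Definition rooted_K2 (T : finType) (e : rel T) : rel (T + T) :=
  fun a b => match a, b with
  | inl x, inl y => e x y
  | inl x, inr y => x == y
  | inr x, inl y => x == y
  | inr _, inr _ => false
  end.

(* Let w represent G. Read w from left to right and replace the first
   occurrence of each letter x by x' x x' (x' = inr x is the pendant vertex of
   x), each later occurrence except the last by x x', and the last one by x.
   Erasing the primed letters gives back w, so the unprimed letters still
   represent G; x and x' alternate; and the factor x' x x' puts two copies of
   x' next to each other in the restriction to {x', v} for every other v, so
   x' alternates with nothing else.  A letter occurring k times in w yields
   2k letters, or 3 if k = 1, and the letters occurring once in w pairwise
   alternate, i.e. form a clique of G.  Starting from a shortest w gives the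
   bound. *)

From Stdlib Require Import ClassicalDescription.
From mathcomp Require Import all_boot.
Set Implicit Arguments. Unset Strict Implicit. Unset Printing Implicit Defensive.

Fixpoint alt (A : Type) (a b : A) (n : nat) : seq A :=
  if n is n'.+1 then a :: alt b a n' else [::].

Lemma size_alt (A : Type) (a b : A) n : size (alt a b n) = n.
Proof. by elim: n a b => //= n IH a b; rewrite IH. Qed.

Lemma map_alt (A B : Type) (f : A -> B) a b n :
  map f (alt a b n) = alt (f a) (f b) n.
Proof. by elim: n a b => //= n IH a b; rewrite IH. Qed.

Lemma mkseq_alt (A : Type) (a b : A) n :
  mkseq (fun i => if odd i then b else a) n = alt a b n.
Proof.
rewrite /mkseq; suff -> m : map (fun i => if odd i then b else a) (iota m n) =
    if odd m then alt b a n else alt a b n by [].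
by elim: n m => [|n IH] m /=; rewrite ?IH /=; case: (odd m).
Qed.

Lemma alt_adjacent_eq (A : Type) (a b z : A) n s1 s2 :
  alt a b n = s1 ++ z :: z :: s2 -> a = b.
Proof.
elim: n a b s1 => [|n IH] a b [|c s1] //=.
- by case=> -> {IH}; case: n => //= n [->].
- by case=> _ /IH ->.
Qed.

Lemma count_pred2 (T : eqType) (s : seq T) a b : a != b ->
  count (fun z => (z == a) || (z == b)) s = count_mem a s + count_mem b s.
Proof.
move=> /negbTE ab; rewrite -count_predUI.
rewrite (@eq_count _ (predI (pred1 a) (pred1 b)) pred0) ?count_pred0 ?addn0 // => z /=.
by case: (z =P a) => // ->.
Qed.

Section Alternation.

Variable T : eqType.
Implicit Types (w s : seq T) (x y : T).

Lemma alternateE w x y :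
  alternate w x y <-> exists k, [seq z <- w | (z == x) || (z == y)] = alt x y k
                         \/ [seq z <- w | (z == x) || (z == y)] = alt y x k.
Proof. by split=> -[k H]; exists k; rewrite !mkseq_alt in H *. Qed.

Lemma alternate_sym w x y : alternate w x y <-> alternate w y x.
Proof.
rewrite !alternateE (@eq_filter _ _ (fun z => (z == y) || (z == x))) => [|z]; last exact: orbC.
by split=> -[k [] Hk]; exists k; [right|left|right|left].
Qed.

Lemma alternate_count1 w x y :
  x != y -> count_mem x w = 1 -> count_mem y w = 1 -> alternate w x y.
Proof.
move=> xy wx wy; apply/alternateE; exists 2.
set P := fun z => (z == x) || (z == y).
have cnt z : P z -> count_mem z (filter P w) = count_mem z w.
  by move=> Pz; rewrite count_filter; apply: eq_count => u /=; case: eqP => // ->.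
have fx : count_mem x (filter P w) = 1 by rewrite cnt // /P eqxx.
have fy : count_mem y (filter P w) = 1 by rewrite cnt // /P eqxx orbT.
have : size (filter P w) = 2 by rewrite size_filter count_pred2 // wx wy.
move: fx fy (filter_all P w); move/negbTE: xy => xy.
case: (filter P w) => [|a [|b []]] //= fx fy /and3P[/orP[]/eqP ea /orP[]/eqP eb] _;
  subst a b; move: fx fy; rewrite ?eqxx ?xy 1?(eq_sym y x) ?xy //; by [left|right].
Qed.

Lemma triple_not_alternate (A B : seq T) a b v :
  v != a -> v != b -> ~ alternate (A ++ [:: a; b; a] ++ B) a v.
Proof.
move=> /negbTE va /negbTE vb /alternateE[k].
rewrite !filter_cat /= eqxx (eq_sym b v) vb orbF.
case: (b =P a) => [->|_] /= [] /esym eq_alt; have av := alt_adjacent_eq eq_alt;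
  by move: va; rewrite av eqxx.
Qed.

End Alternation.

Lemma alternate_map (A B : eqType) (f : A -> B) (s : seq A) x y : injective f ->
  alternate (map f s) (f x) (f y) <-> alternate s x y.
Proof.
move=> f_inj; rewrite !alternateE filter_map.
under eq_filter => z do rewrite /= !(inj_eq f_inj).
split=> -[k H]; exists k; rewrite -!map_alt in H *.
  by case: H => /(inj_map f_inj) ->; [left|right].
by case: H => ->; [left|right].
Qed.

Section SumEq.

Variables A B : eqType.
Implicit Types (a : A) (b : B).

Lemma eq_inl a a' : (inl a == inl a' :> A + B) = (a == a'). Proof. by []. Qed.
Lemma eq_inr b b' : (inr b == inr b' :> A + B) = (b == b'). Proof. by []. Qed.
Lemma eq_inl_inr a b : (inl a == inr b :> A + B) = false. Proof. by []. Qed.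
Lemma eq_inr_inl a b : (inr b == inl a :> A + B) = false. Proof. by []. Qed.

End SumEq.

Definition eq_sumE := (eq_inl, eq_inr, eq_inl_inr, eq_inr_inl).

Section PendantWord.

Variable T : eqType.
Implicit Types (seen s : seq T) (x : T).

Fixpoint pendant_word seen s : seq (T + T) :=
  if s is a :: s' then
    let rest := pendant_word (a :: seen) s' in
    if a \in seen then inl a :: (if a \in s' then inr a :: rest else rest)
    else [:: inr a, inl a, inr a & rest]
  else [::].

Lemma filter_pendant_word_inl (Q : pred (T + T)) seen s :
  (forall a, Q (inr a) = false) ->
  filter Q (pendant_word seen s) = filter Q (map inl s).
Proof.
move=> Qr; elim: s seen => //= a s IH seen.
by case: (a \in seen) (a \in s) => [] [] /=; rewrite ?Qr IH.
Qed.

Lemma filter_pendant_word_pair x seen s :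
  let k := count_mem x s in
  [seq z <- pendant_word seen s | (z == inr x) || (z == inl x)] =
  if x \in seen then alt (inl x) (inr x) k.*2.-1
  else alt (inr x) (inl x) (k.*2 + (k == 1)).
Proof.
elim: s seen => [|a s IH] seen /=; first by case: (x \in seen).
have [->|ax] := eqVneq a x.
  have -> : (x \in s) = (0 < count_mem x s) by rewrite -has_pred1 has_count.
  move: (IH (x :: seen)); rewrite /= mem_head.
  case: (count_mem x s) => [|k] rest; case: (x \in seen);
    by rewrite /= !eq_sumE eqxx /= rest ?doubleS /= ?addn0.
have := IH (a :: seen); rewrite /= in_cons eq_sym (negbTE ax) /= add0n => <-.
by case: (a \in seen) (a \in s) => [] [] /=; rewrite !eq_sumE (negbTE ax).
Qed.

Lemma pendant_word_infix x seen s : x \in s -> x \notin seen ->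
  exists A B, pendant_word seen s = A ++ [:: inr x; inl x; inr x] ++ B.
Proof.
elim: s seen => // a s IH seen.
have [<- _ xseen|xa] := eqVneq x a.
  by exists [::], (pendant_word (x :: seen) s); rewrite /= (negbTE xseen).
rewrite in_cons (negbTE xa) => xs xseen.
have [P ->] : exists P, pendant_word seen (a :: s) = P ++ pendant_word (a :: seen) s.
  rewrite /=; case: (a \in seen) (a \in s) => [] [];
  by [exists [:: inl a; inr a] | exists [:: inl a] | exists [:: inr a; inl a; inr a]].
have [|A [B ->]] := IH (a :: seen) xs; first by rewrite in_cons negb_or xa.
by exists (P ++ A), B; rewrite -catA.
Qed.

End PendantWord.

Lemma sum_count_mem (T : finType) (s : seq T) : \sum_(x : T) count_mem x s = size s.
Proof.
elim: s => [|a s IH] /=; first by rewrite big1.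
by rewrite big_split /= IH (bigD1 a) //= eqxx big1 // => x /negbTE; rewrite eq_sym => ->.
Qed.

Lemma size_pendant_word (T : finType) (w : seq T) :
  size (pendant_word [::] w) = 2 * size w + #|[set x | count_mem x w == 1]|.
Proof.
rewrite -[LHS]sum_count_mem big_sumType /= addnC -big_split /=.
under eq_bigr => x _.
  rewrite -count_pred2 // -size_filter filter_pendant_word_pair /= size_alt -mul2n.
over.
rewrite big_split /= -big_distrr sum_count_mem -sum1dep_card [in RHS]big_mkcond /=.
by congr (_ + _); apply: eq_bigr => x _; case: (_ == 1).
Qed.

Lemma alternate_pendant_word_inl (T : eqType) (seen s : seq T) x y :
  alternate (pendant_word seen s) (inl x) (inl y) <-> alternate s x y.
Proof.
by rewrite -(alternate_map s x y (@inl_inj T T)) /alternate filter_pendant_word_inl.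
Qed.

Lemma pendant_word_represents (T : finType) (e : rel T) (w : seq T) :
  represents e w -> represents (rooted_K2 e) (pendant_word [::] w).
Proof.
move=> [w_all w_rep]; set W := pendant_word [::] w.
have triple x : exists A B, W = A ++ [:: inr x; inl x; inr x] ++ B.
  exact: pendant_word_infix (w_all x) _.
have pendant_edge x : alternate W (inr x) (inl x).
  by apply/alternateE; rewrite filter_pendant_word_pair /=; eexists; left.
have pendant_non_edge x v : v != inr x -> v != inl x -> alternate W (inr x) v -> false.
  by have [A [B ->]] := triple x; move=> vr vl /(triple_not_alternate vr vl).
split.
  by case=> x; have [A [B ->]] := triple x; rewrite !(mem_cat, inE) eqxx ?orbT.
case=> [x|x] [y|y] /=; rewrite ?eq_sumE => xy.
- by rewrite w_rep // alternate_pendant_word_inl.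
- have [<-|{}xy] := eqVneq x y; first by split=> // _; apply/alternate_sym.
  by split=> // /alternate_sym; apply: pendant_non_edge; rewrite ?eq_sumE // eq_sym.
- have [<-|{}xy] := eqVneq x y; first by split=> // _.
  by split=> //; apply: pendant_non_edge; rewrite ?eq_sumE // eq_sym.
- by split=> //; apply: pendant_non_edge; rewrite ?eq_sumE // eq_sym.
Qed.

Lemma l_rep_min (T : finType) (e : rel T) (w : seq T) :
  represents e w -> l_rep e <= size w.
Proof.
move=> ew; rewrite /l_rep; case: excluded_middle_informative => // ?.
case: ex_minnP => m _; apply; rewrite /rep_length_b.
by case: excluded_middle_informative => // -[]; exists w.
Qed.

Lemma l_rep_attained (T : finType) (e : rel T) :
  word_representable e -> exists2 w, represents e w & size w = l_rep e.
Proof.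
rewrite /l_rep; case: excluded_middle_informative => // ? _.
case: ex_minnP => n; rewrite /rep_length_b.
by case: excluded_middle_informative => // -[w [ew sw]] _ _; exists w.
Qed.

Lemma count1_clique (T : finType) (e : rel T) (w : seq T) :
  represents e w -> is_clique e [set x | count_mem x w == 1].
Proof.
move=> [_ w_rep]; apply/forallP => x; apply/implyP; rewrite inE => /eqP wx.
apply/forallP => y; apply/implyP; rewrite inE => /eqP wy; apply/implyP => xy.
exact/(w_rep x y xy)/alternate_count1.
Qed.

Lemma clique_le_clique_number (T : finType) (e : rel T) (A : {set T}) :
  is_clique e A -> #|A| <= clique_number e.
Proof. exact: (@leq_bigmax_cond _ (is_clique e) (fun B : {set T} => #|B|)). Qed.

Theorem mainTheorem9 (T : finType) (e : rel T) :
  simple_graph e -> word_representable e ->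
  word_representable (rooted_K2 e) /\
  l_rep (rooted_K2 e) <= 2 * l_rep e + clique_number e.
Proof.
move=> _ /l_rep_attained[w ew <-].
have eW := pendant_word_represents ew.
split; first by exists (pendant_word [::] w).
rewrite (leq_trans (l_rep_min eW)) // size_pendant_word leq_add2l.
exact/clique_le_clique_number/count1_clique.
Qed.
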